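(* Let $(X,d)$ be a metric space with $|X|=n$ and $k\in[n]$. The procedure $\mathtt{recMSD}(X,k)$ runs in time $n^{O(1)}$.
   Context: $\operatorname{diam}(S)=\max_{p,q\in S}d(p,q)$, $\operatorname{Ball}(x,R)=\{z\in X:d(x,z)\le R\}$, and the cost of a collection of clusters is the sum of their diameters. The randomized procedure $\mathtt{recMSD}(S,t)$ (for nonempty $S\subseteq X$, $t\in[k]$) is: set $\mathcal{C}_i\gets\{S\}$ for all $i\in\{1,\dots,t\}$; if $t=1$ or $|S|=1$, return $(\mathcal{C}_1,\dots,\mathcal{C}_t)$. Otherwise let $x,y\in S$ with $d(x,y)=\operatorname{diam}(S)$, choose $R\in[0,\operatorname{diam}(S)]$ uniformly at random, let $S_1=S\cap\operatorname{Ball}(x,R)$ and $S_2=S\setminus\operatorname{Ball}(x,R)$, compute $\mathcal{A}=\mathtt{recMSD}(S_1,t-1)$ and $\mathcal{B}=\mathtt{recMSD}(S_2,t-1)$; then for all $i,j\in\{1,\dots,t-1\}$ with $i+j\le t$, if $\operatorname{cost}(\mathcal{A}_i\cup\mathcal{B}_j)<\operatorname{cost}(\mathcal{C}_{i+j})$ set $\mathcal{C}_{i+j}\gets\mathcal{A}_i\cup\mathcal{B}_j$. Return $(\mathcal{C}_1,\dots,\mathcal{C}_t)$. *)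

From HB Require Import structures.
From mathcomp Require Import all_boot all_order all_algebra.
Set Implicit Arguments. Unset Strict Implicit. Unset Printing Implicit Defensive.
Import Order.TTheory GRing.Theory Num.Theory.
Local Open Scope ring_scope.

Section RecMSD.
Variables (R : realFieldType) (T : finType) (d : T -> T -> R).

Definition is_metric : Prop :=
  [/\ forall x y, 0 <= d x y,
      forall x y, d x y = 0 <-> x = y,
      forall x y, d x y = d y x &
      forall x y z, d x z <= d x y + d y z].

(** diam(S) = max_{p,q in S} d(p,q)  (0 for the empty set) *)
Definition diam (S : {set T}) : R :=
  \big[Num.max/0]_(pq in setX S S) d pq.1 pq.2.

Definition ball_in (S : {set T}) (x : T) (r : R) : {set T} :=
  [set z in S | d x z <= r].

(** [pick S] returns the pair (x,y) used by the algorithm; we only require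
    it to be a diametral pair of S whenever S is nonempty. *)
Definition diametral_picker (pick : {set T} -> T * T) : Prop :=
  forall S : {set T}, S != set0 ->
    [/\ (pick S).1 \in S, (pick S).2 \in S & d (pick S).1 (pick S).2 = diam S].

(** Cost of the local (non-recursive) work of one call recMSD(S,t):
    - initialising C_1..C_t : t
    - finding a diametral pair : |S|^2 distance evaluations
    - computing S1, S2 : |S|
    - for each of the <= t^2 pairs (i,j): computing cost(A_i u B_j)
      (sum of diameters of clusters partitioning S, <= |S|^2 distance
      evaluations) and one comparison. *)
Definition local_cost (S : {set T}) (t : nat) : nat :=
  (t + #|S| ^ 2 + #|S| + t ^ 2 * (#|S| ^ 2 + 1))%N.

(** Randomness: the uniformly random
    R in [0, diam S] is written R = u p * diam S, where p : seq bool is the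
    position of the call in the recursion tree and 0 <= u p <= 1.
    Base case (t = 1 or |S| <= 1): cost t (initialisation) + 1 (test). *)
Fixpoint rec_time (pick : {set T} -> T * T) (u : seq bool -> R)
    (t : nat) (S : {set T}) (p : seq bool) {struct t} : nat :=
  match t with
  | 0 => 1%N
  | t'.+1 =>
      if (t' == 0%N) || (#|S| <= 1)%N then (t + 1)%N
      else
        let x := (pick S).1 in
        let r := u p * diam S in
        let S1 := ball_in S x r in
        let S2 := S :\: S1 in
        (local_cost S t + 1 + rec_time pick u t' S1 (rcons p false)
                           + rec_time pick u t' S2 (rcons p true))%N
  end.

End RecMSD.

From HB Require Import structures.
From mathcomp Require Import all_boot all_order all_algebra.
From mathcomp Require Import zify.
Import Order.TTheory GRing.Theory Num.Theory.
Local Open Scope ring_scope.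

(* The two recursive calls of recMSD(S, t) split S into the disjoint sets S1
   and S2, and the recursion has depth t.  A call that recurses has |S| >= 2,
   so its local work M (polynomial in n) is absorbed by M |S| / 2; by induction
   on t the total time is at most M t |S| + t + 1 <= M k n + k + 1 = n^O(1).
   This holds for any splitting point and any radii. *)

Lemma local_cost_le (T : finType) (S : {set T}) (t m : nat) :
  (t <= m)%N -> (#|S| <= m)%N -> (local_cost S t + t <= 6 * m ^ 4)%N.
Proof.
rewrite /local_cost => le_tm le_Sm.
have sq_S : (#|S| ^ 2 <= m ^ 2)%N by rewrite leq_exp2r.
have sq_t : (t ^ 2 <= m ^ 2)%N by rewrite leq_exp2r.
have pairs : (t ^ 2 * (#|S| ^ 2 + 1) <= m ^ 4 + m ^ 2)%N.
  have -> : (m ^ 4 + m ^ 2 = m ^ 2 * (m ^ 2 + 1))%N by rewrite mulnDr muln1 -expnD.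
  by rewrite leq_mul ?leq_add2r.
have [m0|m_gt0] := posnP m; first by subst m; lia.
have m_le4 : (m <= m ^ 4)%N by rewrite -{1}(expn1 m) leq_pexp2l.
have m2_le4 : (m ^ 2 <= m ^ 4)%N by rewrite leq_pexp2l.
lia.
Qed.

Section RecTime.
Context {R : realFieldType} {T : finType} (d : T -> T -> R).

Lemma card_ball_in_split (S : {set T}) (x : T) (r : R) :
  #|S| = (#|ball_in d S x r| + #|S :\: ball_in d S x r|)%N.
Proof.
have sub_ball : ball_in d S x r \subset S.
  by apply/subsetP => z; rewrite inE => /andP[].
by rewrite -(cardsID (ball_in d S x r) S) (setIidPr sub_ball).
Qed.

Variables (pick : {set T} -> T * T) (u : seq bool -> R).

Lemma rec_time_le (t0 M : nat) :
  (forall (S : {set T}) t, (t <= t0)%N -> (local_cost S t + t <= M)%N) ->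
  forall t, (t <= t0)%N -> forall S p,
  (rec_time d pick u t S p <= M * t * #|S| + t + 1)%N.
Proof.
move=> local_le; elim=> [|t IH] le_t S p /=; first by rewrite muln0 mul0n.
case: ifP => [_|/norP[_]]; first by lia.
rewrite -ltnNge => S_ge2.
have splitS := card_ball_in_split S (pick S).1 (u p * diam d S).
set S1 := ball_in _ _ _ _ in splitS *.
have le1 := IH (ltnW le_t) S1 (rcons p false).
have le2 := IH (ltnW le_t) (S :\: S1) (rcons p true).
have local := local_le S t.+1 le_t.
have absorb : (M * 2 <= M * #|S|)%N by rewrite leq_mul2l S_ge2 orbT.
have -> : (M * t.+1 * #|S| = M * t * #|S1| + M * t * #|S :\: S1| + M * #|S|)%N.
  by rewrite [in LHS]splitS; nia.
lia.
Qed.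

End RecTime.

Theorem lemma3 :
  exists c : nat,
  forall (R : realFieldType) (T : finType) (d : T -> T -> R)
         (pick : {set T} -> T * T) (u : seq bool -> R) (k : nat),
    is_metric d ->
    diametral_picker d pick ->
    (forall p, 0 <= u p <= 1) ->
    (1 <= k <= #|T|)%N ->
    (rec_time d pick u k [set: T] [::] <= c * #|T| ^ c)%N.
Proof.
exists 8%N => R T d pick u k _ _ _ /andP[k_gt0 le_kn].
set n := #|T|.
have n_gt0 : (0 < n)%N by apply: leq_trans le_kn.
have local_le (S : {set T}) t : (t <= n)%N -> (local_cost S t + t <= 6 * n ^ 4)%N.
  by move=> le_tn; apply: local_cost_le le_tn (max_card _).
have := rec_time_le d pick u _ _ local_le _ le_kn [set: T] [::].
rewrite cardsT -/n => /leq_trans; apply.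
have work : (6 * n ^ 4 * k * n <= 6 * n ^ 6)%N.
  have -> : (n ^ 6 = n ^ 4 * n * n)%N by rewrite -!expnSr.
  by rewrite -!mulnA !leq_mul2l leq_mul2r le_kn !orbT.
have n_le6 : (n <= n ^ 6)%N by rewrite -{1}(expn1 n) leq_pexp2l.
have one_le6 : (1 <= n ^ 6)%N by rewrite expn_gt0 n_gt0.
have n6_le8 : (n ^ 6 <= n ^ 8)%N by rewrite leq_pexp2l.
lia.
Qed.
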